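(* Let $n\ge 1$, $0<\nu\le 1$, $\rho>0$, and define on $\mathbb{R}^n$ $$f_0(\xi)=\exp(\rho|\xi|^\nu),\qquad f(\xi)=\exp\big(\rho(|\xi|^\nu\vee 1)\big).$$ Then for all $\xi,\eta\in\mathbb{R}^n$ the function $f$ satisfies: (i) $f(\xi)\le f(\xi-\eta)f(\eta)$ for all $\xi,\eta$; (ii) $f(\xi)\le f(\xi-\eta)f_0(\eta)^\nu$ whenever $|\xi|\wedge|\eta|\le|\xi-\eta|$; (iii) $|f(\xi)-f(\eta)|\,|\eta|^{1-\nu}\le |\xi-\eta|^{1-\nu}f(\xi-\eta)f(\eta)$ for all $\xi,\eta$; (iv) $|f(\xi)-f(\eta)|\,|\eta|^{1-\nu}\le C|\xi-\eta|^{1-\nu}f_0(\xi-\eta)^\nu f(\eta)$ whenever $|\xi|\wedge|\xi-\eta|\le|\eta|$; (v) $|f(\xi)-f(\eta)|\,|\eta|^{1-\nu}\le C|\xi-\eta|^{1-\nu}f(\xi-\eta)f_0(\eta)^\nu$ whenever $|\xi|\wedge|\eta|\le|\xi-\eta|$. In (iv) and (v) one can take $C=1$, except in the region $|\xi|\le|\xi-\eta|\le|\eta|$ where one can take $C=2^{1-\nu}$. Moreover, the function $f_0$ satisfies the same estimates (i)–(v) as $f$ (with $f$ replaced by $f_0$ throughout).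
   Context: $a\vee b=\max(a,b)$, $a\wedge b=\min(a,b)$. *)

From HB Require Import structures.
From mathcomp Require Import all_boot all_order all_algebra.
From mathcomp Require Import all_classical all_reals all_analysis.
Set Implicit Arguments. Unset Strict Implicit. Unset Printing Implicit Defensive.
Import Order.TTheory GRing.Theory Num.Theory.
Local Open Scope ring_scope.

Definition enorm (R : realType) (n : nat) (x : 'rV[R]_n) : R :=
  Num.sqrt (\sum_(i < n) x 0 i ^+ 2).

Definition f0 (R : realType) (n : nat) (rho nu : R) (x : 'rV[R]_n) : R :=
  expR (rho * powR (enorm x) nu).

Definition fw (R : realType) (n : nat) (rho nu : R) (x : 'rV[R]_n) : R :=
  expR (rho * Num.max (powR (enorm x) nu) 1).

Definition Cconst (R : realType) (n : nat) (nu : R) (xi eta : 'rV[R]_n) : R :=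
  if (enorm xi <= enorm (xi - eta)) && (enorm (xi - eta) <= enorm eta)
  then powR 2 (1 - nu) else 1.

(* Estimates (i)-(v) for a weight g, with f_0 := h (the f_0 appearing with
   exponent nu on the right-hand sides). *)
Definition estimates (R : realType) (n : nat) (nu : R)
    (g h : 'rV[R]_n -> R) : Prop :=
  forall xi eta : 'rV[R]_n,
  g xi <= g (xi - eta) * g eta /\
  (Num.min (enorm xi) (enorm eta) <= enorm (xi - eta) ->
     g xi <= g (xi - eta) * powR (h eta) nu) /\
  `|g xi - g eta| * powR (enorm eta) (1 - nu)
     <= powR (enorm (xi - eta)) (1 - nu) * g (xi - eta) * g eta /\
  (Num.min (enorm xi) (enorm (xi - eta)) <= enorm eta ->
     `|g xi - g eta| * powR (enorm eta) (1 - nu)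
       <= Cconst nu xi eta * powR (enorm (xi - eta)) (1 - nu)
          * powR (h (xi - eta)) nu * g eta) /\
  (Num.min (enorm xi) (enorm eta) <= enorm (xi - eta) ->
     `|g xi - g eta| * powR (enorm eta) (1 - nu)
       <= Cconst nu xi eta * powR (enorm (xi - eta)) (1 - nu)
          * g (xi - eta) * powR (h eta) nu).

From HB Require Import structures.
From mathcomp Require Import all_boot all_order all_algebra.
From mathcomp Require Import all_classical all_reals all_analysis.
From mathcomp Require Import lra ring.
Import Order.TTheory GRing.Theory Num.Theory.
Local Open Scope ring_scope.

(* Write a = |xi|, b = |eta|, c = |xi - eta|, so that a <= c + b and b <= a + c.
   Both weights are t |-> exp(rho psi(t^nu)) evaluated at a norm, with psi the
   identity for f0 and psi = max(., 1) for f; all that matters about psi is that it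
   is nondecreasing, satisfies psi(u) <= psi(v) + (u - v) for v <= u, and
   dominates the identity.  Moreover f0^nu = exp(rho nu t^nu).  Each estimate
   thus becomes a scalar inequality in a, b, c.  Concavity of t^nu gives, via its
   tangent lines, subadditivity, (x + y)^nu <= x^nu + nu y^nu for y <= x, and
   ((b + d)^nu - b^nu) b^(1-nu) <= nu d.  Convexity of exp gives
   e^B - e^A <= e^B (B - A), and, since (e^x - 1)/x is nondecreasing, turns a bound
   x b^(1-nu) <= c^(1-nu) y with x <= y into (e^x - 1) b^(1-nu) <= c^(1-nu) (e^y - 1).
   The constant 2^(1-nu) only enters through b^(1-nu) <= 2^(1-nu) c^(1-nu) when
   b <= 2c. *)

Set Implicit Arguments.
Unset Strict Implicit.

Section ExpPowR.
Variable R : realType.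
Implicit Types a b c r t u x y z : R.

Lemma ler_powR2r r x y : 0 <= r -> 0 <= x -> x <= y -> x `^ r <= y `^ r.
Proof.
move=> r0 x0 xy; apply: ge0_ler_powR; rewrite ?nnegrE //.
exact: le_trans xy.
Qed.

Lemma powR_mulB1 r t : 0 <= t -> t `^ r * t `^ (1 - r) = t.
Proof.
by move=> t0; rewrite -powRD addrC subrK ?powRr1 // oner_eq0.
Qed.

Lemma powR_le_double r b c : 0 <= r -> 0 <= b -> 0 <= c -> b <= 2 * c ->
  b `^ r <= 2 `^ r * c `^ r.
Proof. by move=> r0 b0 c0 bc; rewrite -powRM ?ler0n //; apply: ler_powR2r. Qed.

(* Young's inequality with exponents [1/r] and [1/(1-r)]. *)
Lemma powR_bernoulli x r : 0 <= x -> 0 <= r <= 1 -> x `^ r <= 1 + r * (x - 1).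
Proof.
move=> x0 /andP[r0 r1].
have [->|rn0] := eqVneq r 0; first by rewrite powRr0 mul0r addr0.
have [->|rn1] := eqVneq r 1; first by rewrite powRr1 // mul1r; lra.
have r_gt0 : 0 < r by rewrite lt_neqAle eq_sym rn0.
have r'_gt0 : 0 < 1 - r by rewrite subr_gt0 lt_neqAle rn1.
have := @conjugate_powR R (x `^ r) 1 r^-1 (1 - r)^-1 (powR_ge0 _ _) ler01.
rewrite !invr_gt0 r_gt0 r'_gt0 !invrK addrC subrK => /(_ isT isT erefl).
rewrite -powRrM mulfV ?gt_eqF // powRr1 // powR1 mulr1 => young.
by apply: (le_trans young); rewrite mulrC; lra.
Qed.

Lemma expRB1_slope x y : 0 <= x <= y -> y * (expR x - 1) <= x * (expR y - 1).
Proof.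
move=> /andP[x0 xy]; have [y_le0|y_gt0] := leP y 0.
  have -> : x = 0 by lra.
  by rewrite expR0 subrr !mulr0 mul0r.
have ex : expR x = expR y `^ (x / y) by rewrite -expRM mulrC divfK ?gt_eqF.
have xy01 : 0 <= x / y <= 1.
  by rewrite divr_ge0 ?ler_pdivrMr ?mul1r // ltW.
have h : expR x - 1 <= x / y * (expR y - 1).
  by have := powR_bernoulli (expR_ge0 y) xy01; rewrite -ex; lra.
apply: (le_trans (ler_wpM2l (ltW y_gt0) h)).
by rewrite mulrA mulrCA divff ?gt_eqF // mulr1.
Qed.

Lemma expRB1_mul_le x y u v : 0 <= x <= y -> 0 <= u -> 0 <= v ->
  x * u <= v * y -> (expR x - 1) * u <= v * (expR y - 1).
Proof.
move=> xy u0 v0 xuvy; have [y_le0|y_gt0] := leP y 0.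
  have -> : x = 0 by case/andP: xy; lra.
  have -> : y = 0 by case/andP: xy; lra.
  by rewrite expR0 subrr mul0r mulr0.
have ey0 : 0 <= expR y - 1 by have := expR_ge1Dx y; lra.
rewrite -(ler_pM2l y_gt0) mulrA.
apply: le_trans (ler_wpM2r u0 (expRB1_slope xy)) _.
by rewrite mulrAC mulrA (mulrC y) ler_wpM2r.
Qed.

Lemma expR_gex x : x <= expR x.
Proof. by have := expR_ge1Dx x; lra. Qed.

Lemma expR_ge1 x : 0 <= x -> 1 <= expR x.
Proof. by rewrite -expR0 ler_expR. Qed.

Lemma expRB_le a b : a <= b -> expR b - expR a <= expR b * (b - a).
Proof.
move=> ab; have -> : expR a = expR b * expR (a - b) by rewrite -expRD addrC subrK.
rewrite -[X in X - _]mulr1 -mulrBr ler_wpM2l ?expR_ge0 //.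
by have := expR_ge1Dx (a - b); lra.
Qed.

Lemma expR_ge2x z : 0 <= z -> 2 * z <= expR z.
Proof.
move=> z0; have -> : expR z = expR (z / 2) * expR (z / 2) by rewrite -expRD -splitr.
have h := expR_ge1Dx (z / 2); have h0 : 0 <= 1 + z / 2 by lra.
apply: le_trans (ler_pM h0 h0 h h); rewrite -subr_ge0.
have -> : (1 + z / 2) * (1 + z / 2) - 2 * z = (z / 2 - 1) ^+ 2 by field.
exact: sqr_ge0.
Qed.

End ExpPowR.

Section PowRConcave.
Variables (R : realType) (nu : R).
Hypotheses (nu_gt0 : 0 < nu) (nu_le1 : nu <= 1).
Implicit Types a b c d u x y : R.

Let nu_ge0 : 0 <= nu. Proof. exact: ltW. Qed.
Let nu'_ge0 : 0 <= 1 - nu. Proof. by rewrite subr_ge0. Qed.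

Lemma powR_tangent a u : 0 < a -> 0 <= u ->
  u `^ nu <= a `^ nu + nu * a `^ nu * (u - a) / a.
Proof.
move=> a_gt0 u0; have ua0 : 0 <= u / a by rewrite divr_ge0 // ltW.
have -> : a `^ nu + nu * a `^ nu * (u - a) / a = a `^ nu * (1 + nu * (u / a - 1)).
  by field; rewrite gt_eqF.
rewrite -{1}(divfK (lt0r_neq0 a_gt0) u) (powRM nu ua0 (ltW a_gt0)) mulrC.
by rewrite ler_wpM2l ?powR_ge0 // powR_bernoulli // nu_ge0.
Qed.

Lemma powRD_le_smaller x y : 0 <= y <= x -> (x + y) `^ nu <= x `^ nu + nu * y `^ nu.
Proof.
move=> /andP[y0 yx]; have x0 := le_trans y0 yx.
have [x_le0|x_gt0] := leP x 0.
  have -> : y = 0 by lra.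
  have -> : x = 0 by lra.
  by rewrite addr0 powR0 ?gt_eqF // mulr0 addr0.
have tan : (x + y) `^ nu <= x `^ nu + nu * x `^ nu * y / x.
  by have := powR_tangent x_gt0 (addr_ge0 x0 y0); rewrite addrAC subrr add0r.
apply: (le_trans tan); rewrite lerD2l ler_pdivrMr // -!mulrA ler_wpM2l //.
rewrite -{1}(powR_mulB1 nu y0) -{2}(powR_mulB1 nu x0) [in X in _ <= X]mulrCA.
by do 2 apply: (ler_wpM2l (powR_ge0 _ _)); apply: ler_powR2r.
Qed.

Lemma powR_subadd x y : 0 <= x -> 0 <= y -> (x + y) `^ nu <= x `^ nu + y `^ nu.
Proof.
move=> x0 y0; wlog yx : x y x0 y0 / y <= x.
  by move=> sub; have [/sub|/ltW/sub] := leP y x; rewrite // addrC [_ + y `^ _]addrC; apply.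
apply: (le_trans (powRD_le_smaller _)); first by rewrite y0 yx.
by rewrite lerD2l ler_piMl ?powR_ge0.
Qed.

Lemma powR_incr_mul_le b d : 0 <= b -> 0 <= d ->
  ((b + d) `^ nu - b `^ nu) * b `^ (1 - nu) <= nu * d.
Proof.
move=> b0 d0; have [b_le0|b_gt0] := leP b 0.
  have -> : b = 0 by lra.
  rewrite add0r powR0 ?gt_eqF // subr0.
  have [->|nu_neq1] := eqVneq nu 1; first by rewrite subrr powRr0 mulr1 mul1r powRr1.
  by rewrite powR0 ?subr_eq0 1?eq_sym // mulr0 mulr_ge0.
have tan : (b + d) `^ nu - b `^ nu <= nu * b `^ nu * d / b.
  by have := powR_tangent b_gt0 (addr_ge0 b0 d0); rewrite addrAC subrr add0r; lra.
apply: (le_trans (ler_wpM2r (powR_ge0 _ _) tan)).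
have -> : nu * b `^ nu * d / b * b `^ (1 - nu) = nu * d * (b `^ nu * b `^ (1 - nu)) / b.
  by ring.
by rewrite (powR_mulB1 nu b0) mulfK // gt_eqF.
Qed.

Lemma powRB_mul_le a b : 0 <= a -> a <= b -> (b `^ nu - a `^ nu) * b `^ (1 - nu) <= b - a.
Proof.
move=> a0 ab; have b0 := le_trans a0 ab.
rewrite mulrBl (powR_mulB1 nu b0) lerD2l lerN2 -{1}(powR_mulB1 nu a0).
by rewrite ler_wpM2l ?powR_ge0 // ler_powR2r.
Qed.

Lemma powRB_mul_le_double a b : 0 <= a -> a <= b -> b <= 2 * a ->
  (b `^ nu - a `^ nu) * b `^ (1 - nu) <= 2 `^ (1 - nu) * nu * (b - a).
Proof.
move=> a0 ab b2a; have b0 := le_trans a0 ab.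
have ba0 : 0 <= b `^ nu - a `^ nu by rewrite subr_ge0 ler_powR2r.
apply: (le_trans (ler_wpM2l ba0 (powR_le_double nu'_ge0 b0 a0 b2a))).
rewrite mulrCA -mulrA ler_wpM2l ?powR_ge0 //.
by have := powR_incr_mul_le a0 (_ : 0 <= b - a); rewrite (addrC a) subrK; apply; rewrite subr_ge0.
Qed.

Lemma powR2_1B_ge1 : 1 <= 2 `^ (1 - nu).
Proof. by have := @ler_powR R 2 (ler1n _ 2) 0 (1 - nu) nu'_ge0; rewrite powRr0. Qed.

Lemma powR2_1B_le2 : 2 `^ (1 - nu) <= 2.
Proof. by apply: ler1_powR; rewrite ?ler1n // lerBlDr lerDl ltW. Qed.

Definition Cscalar a b c := if (a <= c) && (c <= b) then 2 `^ (1 - nu) else 1.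

Lemma Cscalar_ge1 a b c : 1 <= Cscalar a b c.
Proof. by rewrite /Cscalar; case: ifP => // _; exact: powR2_1B_ge1. Qed.

Lemma powR1B_le_Cscalar a b c : 0 <= b -> 0 <= c -> b <= a + c ->
  Num.min a b <= c -> b `^ (1 - nu) <= Cscalar a b c * c `^ (1 - nu).
Proof.
move=> b0 c0 bac; have [bc _|cb] := leP b c.
  by apply: (le_trans (ler_powR2r nu'_ge0 b0 bc)); rewrite ler_peMl ?powR_ge0 ?Cscalar_ge1.
rewrite ge_min [b <= c]leNgt cb orbF => ac.
rewrite /Cscalar ac (ltW cb); apply: powR_le_double => //; lra.
Qed.

End PowRConcave.

Section EuclideanNorm.
Variables (R : realType) (n : nat).
Implicit Types x y : 'rV[R]_n.

Lemma sumr_sqr_ge0 (u : 'I_n -> R) : 0 <= \sum_i u i ^+ 2.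
Proof. by apply: sumr_ge0 => i _; exact: sqr_ge0. Qed.

Lemma sumr_sqr_le0 (u : 'I_n -> R) : \sum_i u i ^+ 2 <= 0 -> forall i, u i = 0.
Proof.
move=> le0 i; have /psumr_eq0P sum0 : \sum_i u i ^+ 2 = 0.
  by apply: le_anti; rewrite le0 sumr_sqr_ge0.
by apply/eqP; rewrite -sqrf_eq0 sum0 // => j _; exact: sqr_ge0.
Qed.

Lemma cauchy_schwarz (u v : 'I_n -> R) :
  \sum_i u i * v i <= Num.sqrt (\sum_i u i ^+ 2) * Num.sqrt (\sum_i v i ^+ 2).
Proof.
set X := \sum_i u i ^+ 2; set Y := \sum_i v i ^+ 2; set S := \sum_i u i * v i.
set p := Num.sqrt X; set q := Num.sqrt Y.
have pX : p ^+ 2 = X := sqr_sqrtr (sumr_sqr_ge0 u).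
have qY : q ^+ 2 = Y := sqr_sqrtr (sumr_sqr_ge0 v).
have [/eqP|pq_neq0] := eqVneq (p * q) 0.
  rewrite mulf_eq0 !sqrtr_eq0 => /orP[/sumr_sqr_le0 u0|/sumr_sqr_le0 v0].
    by rewrite /S big1 ?mulr_ge0 ?sqrtr_ge0 // => i _; rewrite u0 mul0r.
  by rewrite /S big1 ?mulr_ge0 ?sqrtr_ge0 // => i _; rewrite v0 mulr0.
have pq_gt0 : 0 < 2 * (p * q).
  by rewrite mulr_gt0 // lt_neqAle eq_sym pq_neq0 mulr_ge0 ?sqrtr_ge0.
have : 0 <= \sum_i (q * u i - p * v i) ^+ 2 := sumr_sqr_ge0 _.
have -> : \sum_i (q * u i - p * v i) ^+ 2 = q ^+ 2 * X - 2 * (p * q) * S + p ^+ 2 * Y.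
  rewrite /X /Y /S !mulr_sumr -sumrB -big_split /=.
  by apply: eq_bigr => i _; ring.
rewrite -{1}pX -qY.
have -> : q ^+ 2 * p ^+ 2 - 2 * (p * q) * S + p ^+ 2 * q ^+ 2 = 2 * (p * q) * (p * q - S).
  by ring.
by rewrite pmulr_rge0 // subr_ge0.
Qed.

Lemma enorm_ge0 x : 0 <= enorm x.
Proof. exact: sqrtr_ge0. Qed.

Lemma enormN x : enorm (- x) = enorm x.
Proof. by rewrite /enorm; congr Num.sqrt; apply: eq_bigr => i _; rewrite mxE sqrrN. Qed.

Lemma enormD_le x y : enorm (x + y) <= enorm x + enorm y.
Proof.
rewrite /enorm -[leRHS]ger0_norm ?addr_ge0 ?sqrtr_ge0 // -sqrtr_sqr.
rewrite ler_sqrt ?sqr_ge0 // sqrrD !sqr_sqrtr ?sumr_sqr_ge0 // -mulr_natr.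
have -> : \sum_i (x + y) 0 i ^+ 2 =
    \sum_i x 0 i ^+ 2 + \sum_i y 0 i ^+ 2 + 2 * \sum_i x 0 i * y 0 i.
  by rewrite mulr_sumr -!big_split /=; apply: eq_bigr => i _; rewrite mxE; ring.
by have := cauchy_schwarz (x 0) (y 0); lra.
Qed.

End EuclideanNorm.

Section Weight.
Variables (R : realType) (nu rho : R) (psi : R -> R).
Hypotheses (nu_gt0 : 0 < nu) (nu_le1 : nu <= 1) (rho_gt0 : 0 < rho).
Hypotheses (psi_homo : {homo psi : u v / u <= v})
  (psi_lip : forall u v, v <= u -> psi u <= psi v + (u - v))
  (psi_ge : forall u, u <= psi u).
Implicit Types a b c d t x y : R.

Let nu_ge0 : 0 <= nu. Proof. exact: ltW. Qed.

Definition log_weight t := rho * psi (t `^ nu).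

Local Notation g t := (expR (log_weight t)).
Local Notation h t := (expR (rho * t `^ nu * nu)).
Local Notation Q t := (t `^ (1 - nu)).

Lemma log_weight_le_add x y d : 0 <= d -> x `^ nu <= y `^ nu + d ->
  log_weight x <= log_weight y + rho * d.
Proof.
move=> d0 xyd; rewrite /log_weight -mulrDr ler_pM2l //; apply: (le_trans (psi_homo xyd)).
by have := @psi_lip (y `^ nu + d) (y `^ nu); rewrite lerDl addrAC subrr add0r; apply.
Qed.

Lemma log_weight_homo x y : 0 <= x -> x <= y -> log_weight x <= log_weight y.
Proof. by move=> x0 xy; rewrite /log_weight ler_pM2l // psi_homo // ler_powR2r // ltW. Qed.

Lemma log_weight_ge t : rho * t `^ nu <= log_weight t.
Proof. by rewrite /log_weight ler_pM2l. Qed.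

Lemma h_ge1 t : 1 <= h t.
Proof. by rewrite expR_ge1 // !mulr_ge0 ?powR_ge0 // ltW. Qed.

Lemma h_homo x y : 0 <= x -> x <= y -> h x <= h y.
Proof.
by move=> x0 xy; rewrite ler_expR ler_wpM2r ?ler_wpM2l ?ler_powR2r // ltW.
Qed.

Lemma weight_submul a b c : 0 <= a -> 0 <= b -> 0 <= c -> a <= c + b ->
  g a <= g c * g b.
Proof.
move=> a0 b0 c0 acb; rewrite -expRD ler_expR.
have : a `^ nu <= b `^ nu + c `^ nu.
  by rewrite addrC; apply: le_trans (powR_subadd nu_gt0 nu_le1 c0 b0); apply: ler_powR2r.
move/(log_weight_le_add (powR_ge0 _ _)) => /le_trans; apply.
by rewrite addrC lerD2r log_weight_ge.
Qed.

Lemma weight_le_mul_hb a b c : 0 <= a -> 0 <= b -> a <= c + b ->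
  Num.min a b <= c -> g a <= g c * h b.
Proof.
move=> a0 b0 acb; rewrite -expRD ler_expR ge_min => /orP[ac|bc].
  apply: (le_trans (log_weight_homo a0 ac)).
  by rewrite lerDl !mulr_ge0 ?powR_ge0 // ltW.
have : a `^ nu <= c `^ nu + b `^ nu * nu.
  rewrite mulrC; apply: le_trans (powRD_le_smaller nu_gt0 nu_le1 _); last by rewrite b0 bc.
  exact: ler_powR2r.
by move/(log_weight_le_add (mulr_ge0 (powR_ge0 _ _) nu_ge0)); rewrite mulrA.
Qed.

Section Triangle.
Variables a b c : R.
Hypotheses (a0 : 0 <= a) (b0 : 0 <= b) (c0 : 0 <= c).
Hypotheses (acb : a <= c + b) (bac : b <= a + c).

Let Qb0 : 0 <= Q b. Proof. exact: powR_ge0. Qed.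
Let Qc0 : 0 <= Q c. Proof. exact: powR_ge0. Qed.

Lemma weightB_le_dec : a <= b -> g b - g a <= g b * (rho * (b `^ nu - a `^ nu)).
Proof.
move=> ab; apply: (le_trans (expRB_le (log_weight_homo a0 ab))).
rewrite ler_wpM2l ?expR_ge0 // lerBlDl.
by apply: log_weight_le_add; rewrite ?subrKC // subr_ge0 ler_powR2r // ltW.
Qed.

Lemma weightB_le_inc mu : b <= a -> nu <= mu -> (b + c) `^ nu - b `^ nu <= mu * c `^ nu ->
  (g a - g b) * Q b <= g b * (Q c * (expR (rho * c `^ nu * mu) - 1)).
Proof.
move=> ba numu Dle.
have D0 : 0 <= (b + c) `^ nu - b `^ nu by rewrite subr_ge0; apply: ler_powR2r; rewrite ?lerDl.
have xD : log_weight a - log_weight b <= rho * ((b + c) `^ nu - b `^ nu).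
  rewrite lerBlDl; apply: log_weight_le_add => //.
  by rewrite subrKC (addrC b); apply: ler_powR2r.
have -> : g a - g b = g b * (expR (log_weight a - log_weight b) - 1).
  by rewrite mulrBr mulr1 -expRD subrKC.
rewrite -mulrA ler_wpM2l ?expR_ge0 //; apply: expRB1_mul_le => //.
- rewrite subr_ge0 log_weight_homo //=; apply: (le_trans xD).
  by rewrite -mulrA ler_pM2l // mulrC.
- have -> : Q c * (rho * c `^ nu * mu) = rho * (mu * (c `^ nu * Q c)) by ring.
  rewrite powR_mulB1 //; apply: (le_trans (ler_wpM2r Qb0 xD)).
  rewrite -mulrA ler_pM2l //; apply: (le_trans (powR_incr_mul_le nu_gt0 nu_le1 b0 c0)).
  by rewrite ler_wpM2r.
Qed.

Lemma weight_diff_le : `|g a - g b| * Q b <= Q c * g c * g b.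
Proof.
rewrite [leRHS]mulrC; have [ab|ba] := leP a b.
  rewrite distrC ger0_norm; last by rewrite subr_ge0 ler_expR log_weight_homo.
  apply: (le_trans (ler_wpM2r Qb0 (weightB_le_dec ab))).
  rewrite -mulrA ler_wpM2l ?expR_ge0 // -mulrA; apply: (@le_trans _ _ (rho * c)).
    by rewrite ler_pM2l //; apply: (le_trans (powRB_mul_le nu_le1 a0 ab)); rewrite lerBlDl.
  rewrite -{1}(powR_mulB1 nu c0) mulrA mulrC ler_wpM2l //.
  exact: le_trans (log_weight_ge c) (expR_gex _).
rewrite ger0_norm; last by rewrite subr_ge0 ler_expR log_weight_homo // ltW.
apply: (le_trans (weightB_le_inc (ltW ba) nu_le1 _)).
  by rewrite mul1r lerBlDl powR_subadd.
rewrite mulr1 ler_wpM2l ?expR_ge0 // ler_wpM2l // lerBlDr.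
by apply: (@le_trans _ _ (g c)); rewrite ?lerDl // ler_expR log_weight_ge.
Qed.

Lemma weight_diff_le_hc : Num.min a c <= b ->
  `|g a - g b| * Q b <= Cscalar nu a b c * Q c * h c * g b.
Proof.
move=> mac; rewrite [leRHS]mulrC.
have K0 : 0 <= Cscalar nu a b c := le_trans ler01 (Cscalar_ge1 nu_le1 a b c).
have [ab|ba] := leP a b.
- rewrite distrC ger0_norm; last by rewrite subr_ge0 ler_expR log_weight_homo.
  have [mabc|] := leP (Num.min a b) c.
    have gba : g b - g a <= g b by rewrite gerBl expR_ge0.
    have gba0 : 0 <= g b - g a by rewrite subr_ge0 ler_expR log_weight_homo.
    apply: (le_trans (ler_pM gba0 Qb0 gba (powR1B_le_Cscalar nu_le1 b0 c0 bac mabc))).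
    by rewrite ler_wpM2l ?expR_ge0 // ler_peMr ?mulr_ge0 ?h_ge1.
  (* Here [Cscalar] is 1: the factor 2^(1-nu) is absorbed by [expR_ge2x]. *)
  rewrite lt_min => /andP[ca cb].
  have b2a : b <= 2 * a.
    by apply: (le_trans bac); rewrite mulr_natl mulr2n lerD2l ltW.
  rewrite /Cscalar [a <= c]leNgt ca /= mul1r.
  apply: (le_trans (ler_wpM2r Qb0 (weightB_le_dec ab))).
  rewrite -[leLHS]mulrA ler_wpM2l ?expR_ge0 //.
  have z0 : 0 <= rho * c `^ nu * nu by rewrite !mulr_ge0 ?powR_ge0 // ltW.
  apply: (@le_trans _ _ (Q c * (2 * (rho * c `^ nu * nu)))); last first.
    by rewrite ler_wpM2l // expR_ge2x.
  have -> : Q c * (2 * (rho * c `^ nu * nu)) = rho * (2 * nu * (c `^ nu * Q c)) by ring.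
  rewrite powR_mulB1 // -[leLHS]mulrA ler_pM2l //.
  apply: (le_trans (powRB_mul_le_double nu_gt0 nu_le1 a0 ab b2a)).
  apply: ler_pM; rewrite ?mulr_ge0 ?powR_ge0 ?subr_ge0 // ?lerBlDl //.
  by rewrite ler_wpM2r // powR2_1B_le2.
- move: mac; rewrite ge_min [a <= b]leNgt ba /= => cb.
  rewrite ger0_norm; last by rewrite subr_ge0 ler_expR log_weight_homo // ltW.
  apply: (le_trans (weightB_le_inc (ltW ba) (lexx nu) _)).
    by rewrite lerBlDl powRD_le_smaller // c0 cb.
  rewrite ler_wpM2l ?expR_ge0 //; apply: (@le_trans _ _ (Q c * h c)).
    by rewrite ler_wpM2l // lerBlDr lerDl.
  by rewrite -[leRHS]mulrA; apply: ler_peMl; rewrite ?mulr_ge0 ?expR_ge0 ?Cscalar_ge1.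
Qed.

Lemma weight_diff_le_hb : Num.min a b <= c ->
  `|g a - g b| * Q b <= Cscalar nu a b c * Q c * g c * h b.
Proof.
move=> mabc; have ga := weight_le_mul_hb a0 b0 acb mabc.
have gb : g b <= g c * h b.
  have [bc|cb] := leP b c.
    by apply: le_trans (ler_peMr (expR_ge0 _) (h_ge1 b)); rewrite ler_expR log_weight_homo.
  have ac : a <= c by move: mabc; rewrite ge_min [b <= c]leNgt cb orbF.
  apply: (le_trans (@weight_le_mul_hb b (b - c) c b0 _ _ _)).
  - by rewrite subr_ge0 ltW.
  - by rewrite subrKC.
  - by rewrite ge_min lerBlDl; apply/orP; right; apply: (le_trans bac); rewrite lerD2r.
  - rewrite ler_wpM2l ?expR_ge0 //.
    by apply: h_homo; [rewrite subr_ge0 ltW | rewrite gerBl].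
have diff : `|g a - g b| <= g c * h b.
  rewrite ler_norml lerNl opprB; apply/andP; split.
    by apply: le_trans gb; rewrite gerBl expR_ge0.
  by apply: le_trans ga; rewrite gerBl expR_ge0.
have -> : Cscalar nu a b c * Q c * g c * h b = g c * h b * (Cscalar nu a b c * Q c) by ring.
exact: ler_pM (normr_ge0 _) Qb0 diff (powR1B_le_Cscalar nu_le1 b0 c0 bac mabc).
Qed.

End Triangle.

Lemma weight_estimates n (w : 'rV[R]_n -> R) :
  (forall z, w z = g (enorm z)) -> estimates nu w (f0 rho nu).
Proof.
move=> wE; have : forall z : 'rV[R]_n, powR (f0 rho nu z) nu = h (enorm z).
  by move=> z; rewrite /f0 -expRM.
(* Abstracting [f0 rho nu] keeps [rewrite] from unfolding it against [enorm]. *)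
move: (f0 rho nu) => f0' f0E xi eta; rewrite !wE !f0E.
have -> : Cconst nu xi eta = Cscalar nu (enorm xi) (enorm eta) (enorm (xi - eta)) by [].
have a0 := enorm_ge0 xi; have b0 := enorm_ge0 eta; have c0 := enorm_ge0 (xi - eta).
have acb : enorm xi <= enorm (xi - eta) + enorm eta.
  by have := enormD_le (xi - eta) eta; rewrite subrK.
have bac : enorm eta <= enorm xi + enorm (xi - eta).
  by have := enormD_le xi (eta - xi); rewrite subrKC -opprB enormN.
split; first exact: weight_submul.
split; first exact: weight_le_mul_hb.
split; first exact: weight_diff_le.
split; first exact: weight_diff_le_hc.
exact: weight_diff_le_hb.
Qed.

End Weight.

Unset Implicit Arguments.

Theorem lemma3p1 (R : realType) (n : nat) (nu rho : R)
  (hn : (1 <= n)%N) (hnu0 : 0 < nu) (hnu1 : nu <= 1) (hrho : 0 < rho) :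
  estimates nu (@fw R n rho nu) (@f0 R n rho nu) /\
  estimates nu (@f0 R n rho nu) (@f0 R n rho nu).
Proof.
split.
- apply: (@weight_estimates R nu rho (fun u => Num.max u 1) hnu0 hnu1 hrho) => //.
  + by move=> u v uv; rewrite ge_max !le_max uv lexx !orbT.
  + move=> u v vu; have v_le : v <= Num.max v 1 by rewrite le_max lexx.
    have one_le : 1 <= Num.max v 1 by rewrite le_max lexx orbT.
    by rewrite ge_max; apply/andP; split; lra.
  + by move=> u; rewrite le_max lexx.
- apply: (@weight_estimates R nu rho id hnu0 hnu1 hrho) => //.
  by move=> u v _; rewrite subrKC.
Qed.
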